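(* Fix $\vartheta\in\mathbb{C}$, let $r_1,r_2$ be the two roots (with multiplicity) of $\vartheta-(\mathtt{h}+1)^2$, let $\omega=3+\max(\mathrm{Re}\, r_1,\mathrm{Re}\, r_2)$ and $\mathbb{C}_\omega=\{z\in\mathbb{C}: \mathrm{Re}\,z\in[\omega,\omega+2)\}$. Let $u=c\prod_{t\in\mathbb{C}_\omega}(\mathtt{h}-t)^{\mathtt{m}(t)}\in\mathbb{C}(\mathtt{h})^\times$ with $c\in\mathbb{C}^\times$ and $\mathtt{m}:\mathbb{C}_\omega\to\mathbb{Z}$ of finite support. Then $L_u\cap\mathbb{C}[\mathtt{h}]=\mathbb{C}[\mathtt{h}]$, i.e. the monic generator of the ideal $L_u\cap\mathbb{C}[\mathtt{h}]$ of $\mathbb{C}[\mathtt{h}]$ is $1$, and hence $\mathbb{C}[\mathtt{h}]\subset L_u$.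
   Context: $\mathfrak{g}=\mathfrak{sl}_2(\mathbb{C})$ with basis $\mathtt{e},\mathtt{f},\mathtt{h}$, $[\mathtt{h},\mathtt{e}]=2\mathtt{e}$, $[\mathtt{h},\mathtt{f}]=-2\mathtt{f}$, $[\mathtt{e},\mathtt{f}]=\mathtt{h}$; Casimir element $\mathtt{c}=(\mathtt{h}+1)^2+4\mathtt{f}\mathtt{e}$; $U_\vartheta=U(\mathfrak{g})/U(\mathfrak{g})(\mathtt{c}-\vartheta)$. Let $\Bbbk=\mathbb{C}(\mathtt{h})$, $\sigma$ the automorphism of $\Bbbk$ fixing $\mathbb{C}$ with $\sigma(\mathtt{h})=\mathtt{h}-2$, and $R=\Bbbk[x,x^{-1},\sigma]$ (skew Laurent polynomials: $xr=\sigma(r)x$ for $r\in\Bbbk$). The assignment $\mathtt{e}\mapsto x$, $\mathtt{f}\mapsto\frac{\vartheta-(\mathtt{h}+1)^2}{4}x^{-1}$, $\mathtt{h}\mapsto\mathtt{h}$ gives an injective algebra homomorphism $U_\vartheta\to R$. For $u\in\Bbbk^\times$, $N_u$ is $\Bbbk$ with the $R$-module structure where $\Bbbk$ acts by multiplication and $x\cdot b=\sigma(b)u$; thus as a $U_\vartheta$-module, $\mathtt{h}$ acts by multiplication, $\mathtt{e}\cdot b=\sigma(b)u$ and $\mathtt{f}\cdot b=\frac{\vartheta-(\mathtt{h}+1)^2}{4}\cdot\frac{\sigma^{-1}(b)}{\sigma^{-1}(u)}$. It is known that $N_u$, viewed as a $U_\vartheta$-module, has a unique simple submodule; this is denoted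 $L_u$. *)

From mathcomp Require Import all_boot all_algebra fraction generic_quotient.
From mathcomp Require Import complex reals.
Set Implicit Arguments. Unset Strict Implicit. Unset Printing Implicit Defensive.
Import GRing.Theory Num.Theory.
Local Open Scope ring_scope.

(* The complex numbers are R[i] for a real field R : realType.
   The field k = C(h) is {fraction {poly R[i]}}, with h = 'X%:F. *)
Notation Kf R := {fraction {poly R[i]}}.
Notation "x %:F" := (@FracField.tofrac _ x) : ring_scope.

Definition ReC (R : realType) (z : R[i]) : R := complex.Re z.

Definition shiftK (R : realType) (a : R[i]) (x : Kf R) : Kf R :=
  let r := repr x in
  ((\n_r) \Po ('X + a%:P))%:F / ((\d_r) \Po ('X + a%:P))%:F.

Definition sigmaK (R : realType) (x : Kf R) : Kf R := shiftK (- 2) x.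
Definition sigmaKinv (R : realType) (x : Kf R) : Kf R := shiftK 2 x.

Definition act_h (R : realType) (b : Kf R) : Kf R := ('X)%:F * b.
Definition act_e (R : realType) (u b : Kf R) : Kf R := sigmaK b * u.
Definition act_f (R : realType) (theta : R[i]) (u b : Kf R) : Kf R :=
  ((theta%:P - ('X + 1) ^+ 2)%:F / 4) * (sigmaKinv b / sigmaKinv u).

(* S is a U_theta-submodule of N_u: a C-subspace of C(h) stable under h, e, f
   (these generate U_theta as an algebra). *)
Definition is_submodule (R : realType) (theta : R[i]) (u : Kf R)
    (S : Kf R -> Prop) : Prop :=
  [/\ S 0,
      (forall x y, S x -> S y -> S (x + y)),
      (forall (c : R[i]) x, S x -> S ((c%:P)%:F * x)) &
      [/\ (forall x, S x -> S (act_h x)),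
           (forall x, S x -> S (act_e u x)) &
           (forall x, S x -> S (act_f theta u x))]].

Definition is_simple_submodule (R : realType) (theta : R[i]) (u : Kf R)
    (S : Kf R -> Prop) : Prop :=
  [/\ is_submodule theta u S,
      (exists x, S x /\ x <> 0) &
      (forall T : Kf R -> Prop, is_submodule theta u T ->
         (forall x, T x -> S x) ->
         (forall x, T x -> x = 0) \/ (forall x, S x -> T x))].

From mathcomp Require Import all_boot all_algebra fraction generic_quotient.
From mathcomp Require Import order complex reals ring lra.
From Stdlib Require Import Classical.
Import Order.TTheory GRing.Theory Num.Theory.
Local Open Scope ring_scope.

(* Being stable under
   h and scalars, L is stable under multiplication by C[h], so L ∩ C[h] is a
   nonzero ideal with some generator g.  Write u = N/D with all roots of N and
   D in the strip C_ω, and P = ϑ - (h+1)^2.  Clearing denominators in e·g and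
   f·g gives the elements g(h-2)·N and P·D(h+2)·g(h+2) of L ∩ C[h], both
   divisible by g.  If g had a root, let a and b be roots of minimal and maximal
   real part: g(a-2) ≠ 0 forces N(a) = 0, so Re a ≥ ω, while g(b+2) ≠ 0 forces
   P(b) = 0 or D(b+2) = 0, so Re b < ω; this contradicts Re a ≤ Re b.  Hence g
   is a nonzero constant and C[h] ⊂ L. *)

Lemma seq_argmin {T : eqType} {R : realDomainType} (f : T -> R) (x : T) (s : seq T) :
  exists2 a, a \in x :: s & {in x :: s, forall b, f a <= f b}.
Proof.
pose F (i : 'I_(size s).+1) := f (nth x (x :: s) i).
case: (@arg_minP _ _ _ ord0 xpredT F isT) => i _ imin.
exists (nth x (x :: s) i); first exact: mem_nth.
move=> b bs; rewrite -(nth_index x bs); rewrite -index_mem in bs.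
exact: (imin (Ordinal bs)).
Qed.

Lemma root_argmin {F : closedFieldType} {R : realDomainType} (f : F -> R) (p : {poly F}) :
  (1 < size p)%N -> exists2 a, root p a & forall b, root p b -> f a <= f b.
Proof.
move=> sp; have p0 : p != 0 by rewrite -size_poly_gt0 (ltn_trans _ sp).
have [rs def_p] := closed_field_poly_normal p.
have rootE z : root p z = (z \in rs).
  by rewrite def_p rootZ ?lead_coef_eq0 // root_prod_XsubC.
case: rs def_p rootE => [|r rs] def_p rootE.
  by move: sp; rewrite def_p big_nil size_scale ?lead_coef_eq0 // size_poly1.
have [a ars amin] := seq_argmin f r rs.
by exists a => [|b]; rewrite rootE // => /amin.
Qed.

Local Notation Re := complex.Re.

Lemma ReD (R : rcfType) (x y : R[i]) : Re (x + y) = Re x + Re y.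
Proof. exact: raddfD. Qed.

Lemma ReB (R : rcfType) (x y : R[i]) : Re (x - y) = Re x - Re y.
Proof. exact: raddfB. Qed.

Lemma Re_natr (R : rcfType) (n : nat) : Re (n%:R : R[i]) = n%:R.
Proof. exact: raddfMn. Qed.

Lemma shift_dvd_size_le1 (R : rcfType) (s : R[i]) (w : R) (p A B : {poly R[i]}) :
  0 < Re s ->
  p %| (p \Po ('X - s%:P)) * A -> p %| B * (p \Po ('X + s%:P)) ->
  (forall z, root A z -> w <= Re z) -> (forall z, root B z -> Re z < w) ->
  (size p <= 1)%N.
Proof.
move=> s_gt0 dvdA dvdB rootA rootB; rewrite leqNgt; apply/negP => sp.
have [a pa amin] := root_argmin (fun z : R[i] => Re z) _ sp.
have [b pb bmax] := root_argmin (fun z => - Re z) _ sp.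
have w_le_a : w <= Re a.
  move: (root_dvdp dvdA pa); rewrite rootM root_comp !hornerE => /orP[/amin|/rootA//].
  by rewrite ReB; lra.
have b_lt_w : Re b < w.
  move: (root_dvdp dvdB pb); rewrite rootM root_comp !hornerE => /orP[/rootB//|/bmax].
  by rewrite ReD; lra.
have := amin _ pb; lra.
Qed.

Lemma root_XsubC_exp (F : idomainType) (n : nat) (a z : F) :
  root (('X - a%:P) ^+ n) z -> z = a.
Proof. by rewrite /root horner_exp hornerXsubC expf_eq0 subr_eq0 => /andP[_ /eqP]. Qed.

Lemma prod_XsubC_expz_numden {F : fieldType} (c : F) (ts : seq F) (m : F -> int) :
  c != 0 ->
  exists N D : {poly F}, [/\ N != 0, D != 0,
    (c%:P)%:F * \prod_(t <- ts) ('X - t%:P)%:F ^ m t * D%:F = N%:F,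
    forall z, root N z -> z \in ts & forall z, root D z -> z \in ts].
Proof.
move=> c0; elim: ts => [|t ts [N [D [N0 D0 uND N_roots D_roots]]]].
  exists c%:P, 1; split=> [|||z|z]; rewrite ?polyC_eq0 ?oner_neq0 //.
  - by rewrite big_nil tofrac1 !mulr1.
  - by rewrite rootC (negbTE c0).
  - by rewrite (negbTE (root1 z)).
have Y0 : ('X - t%:P)%:F != 0 :> {fraction {poly F}}.
  by rewrite tofrac_eq0 polyXsubC_eq0.
rewrite big_cons; case: (m t) => n /=.
- exists (N * ('X - t%:P) ^+ n), D; split=> // [||z|z /D_roots zts].
  + by rewrite mulf_neq0 // expf_neq0 // polyXsubC_eq0.
  + by rewrite -exprnP tofracM tofracXn -uND; ring.
  + by rewrite rootM => /orP[/N_roots zts|/root_XsubC_exp ->]; rewrite inE ?eqxx ?zts ?orbT.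
  + by rewrite inE zts orbT.
- exists N, (D * ('X - t%:P) ^+ n.+1); split=> // [||z /N_roots zts|z].
  + by rewrite mulf_neq0 // expf_neq0 // polyXsubC_eq0.
  + rewrite NegzE -invr_expz -exprnP tofracM tofracXn -uND.
    by rewrite -mulrA [D%:F * _]mulrC mulrACA mulVf ?mul1r ?mulrA; last exact: expf_neq0.
  + by rewrite inE zts orbT.
  + by rewrite rootM => /orP[/D_roots zts|/root_XsubC_exp ->]; rewrite inE ?eqxx ?zts ?orbT.
Qed.

Lemma comp_XaddC_eq0 (R : idomainType) (a : R) (p : {poly R}) :
  (p \Po ('X + a%:P) == 0) = (p == 0).
Proof. by rewrite comp_poly2_eq0 // size_XaddC. Qed.

Lemma mul_repr_denom {R : idomainType} (x : {fraction R}) :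
  x * (\d_(repr x))%:F = (\n_(repr x))%:F.
Proof.
rewrite -[x in x * _]reprK; set r := repr x.
unlock FracField.tofrac.
rewrite -[GRing.mul _ _]/(FracField.mul _ _) -FracField.pi_mul.
apply/eqmodP; rewrite /= FracField.equivfE /FracField.mulf /=.
rewrite !numden_Ratio ?oner_neq0 ?mulf_neq0 ?denom_ratioP ?oner_neq0 //.
by rewrite !mulr1 mulrC.
Qed.

Section Shift.
Context {R : realType}.
Local Notation C := R[i].

Lemma shiftK_frac (a : C) {x : Kf R} {n d : {poly C}} :
  d != 0 -> x * d%:F = n%:F ->
  shiftK a x = (n \Po ('X + a%:P))%:F / (d \Po ('X + a%:P))%:F.
Proof.
move=> d0 xdn; rewrite /shiftK.
have := mul_repr_denom x; set r := repr x => xdn_r.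
have dr0 : \d_r != 0 := denom_ratioP r.
have cross : \n_r * d = n * \d_r.
  by apply/eqP; rewrite -tofrac_eq !tofracM -xdn_r -xdn mulrAC.
apply/eqP; rewrite eqr_div ?tofrac_eq0 ?comp_XaddC_eq0 // -!tofracM -!comp_polyM.
by rewrite cross.
Qed.

Lemma shiftK_poly (a : C) (p : {poly C}) : shiftK a p%:F = (p \Po ('X + a%:P))%:F.
Proof.
rewrite (@shiftK_frac a _ p 1) ?oner_neq0 ?tofrac1 ?mulr1 //.
by rewrite -polyC1 comp_polyC polyC1 tofrac1 divr1.
Qed.

End Shift.

Section Actions.
Context {R : realType} (theta : R[i]) {u : Kf R} {N D : {poly R[i]}}.
Hypotheses (N0 : N != 0) (D0 : D != 0) (uND : u * D%:F = N%:F).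

Lemma act_e_tofrac (p : {poly R[i]}) :
  D%:F * act_e u p%:F = ((p \Po ('X - 2%:P)) * N)%:F.
Proof.
by rewrite /act_e /sigmaK shiftK_poly polyCN mulrCA [D%:F * u]mulrC uND tofracM.
Qed.

Lemma act_f_tofrac (p : {poly R[i]}) :
  (4%:R * (N \Po ('X + 2%:P)))%:F * act_f theta u p%:F =
  ((theta%:P - ('X + 1) ^+ 2) * (D \Po ('X + 2%:P)) * (p \Po ('X + 2%:P)))%:F.
Proof.
rewrite /act_f /sigmaKinv shiftK_poly (shiftK_frac 2 D0 uND) !tofracM rmorph_nat.
have four0 : (4%:R : Kf R) != 0.
  by rewrite -(rmorph_nat (@FracField.tofrac _)) tofrac_eq0 -polyC_natr polyC_eq0 pnatr_eq0.
have N'0 : (N \Po ('X + 2%:P))%:F != 0 by rewrite tofrac_eq0 comp_XaddC_eq0.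
have D'0 : (D \Po ('X + 2%:P))%:F != 0 by rewrite tofrac_eq0 comp_XaddC_eq0.
rewrite invf_div mulrACA [4 * _]mulrCA (mulfV four0) mulr1.
rewrite -[RHS]mulrA; congr (_ * _).
by rewrite mulrCA [_%:F * (_ / _)]mulrCA (mulfV N'0) mulr1 mulrC.
Qed.

End Actions.

Section Submodule.
Context {R : realType} {theta : R[i]} {u : Kf R} {S : Kf R -> Prop}.
Hypothesis S_sub : is_submodule theta u S.

Lemma submodule_mul_poly (q : {poly R[i]}) {x : Kf R} : S x -> S (q%:F * x).
Proof.
case: S_sub => S0 SD SZ [Sh _ _].
elim/poly_ind: q x => [|q c IH] x Sx; first by rewrite tofrac0 mul0r.
rewrite tofracD tofracM mulrDl -mulrA; apply: SD; last exact: SZ.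
exact/IH/Sh.
Qed.

Lemma submodule_modp (p q : {poly R[i]}) : S p%:F -> S q%:F -> S (q %% p)%:F.
Proof.
case: S_sub => _ SD _ _ Sp Sq.
rewrite -[q %% p](addKr (q %/ p * p)) -divp_eq tofracD -mulNr tofracM.
by apply: SD => //; apply: submodule_mul_poly.
Qed.

Lemma submodule_poly_generator : (exists x, S x /\ x <> 0) ->
  exists2 g : {poly R[i]}, g != 0 & S g%:F /\ forall q, S q%:F -> g %| q.
Proof.
case=> x [Sx x0].
have [n Sn n0] : exists2 n : {poly R[i]}, S n%:F & n != 0.
  exists (\n_(repr x)).
    by rewrite -mul_repr_denom mulrC; apply: submodule_mul_poly.
  apply/eqP => n0; apply: x0; apply/eqP.
  move: (mul_repr_denom x); rewrite n0 tofrac0 => /eqP.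
  by rewrite mulf_eq0 tofrac_eq0 (negbTE (denom_ratioP _)) orbF.
elim/ltn_ind: {n}(size n) {-2}n (erefl (size n)) Sn n0 => k IH p sp Sp p0.
case: (classic (exists2 q, S q%:F & ~~ (p %| q))) => [[q Sq q_ndvd]|no_q].
  apply: (IH (size (q %% p))) => //.
  - by rewrite -sp ltn_modp.
  - exact: submodule_modp.
exists p => //; split=> // q Sq.
by apply/negPn/negP => q_ndvd; apply: no_q; exists q.
Qed.

Lemma submodule_poly_unit {g : {poly R[i]}} :
  (size g <= 1)%N -> g != 0 -> S g%:F -> forall p, S p%:F.
Proof.
move=> /size1_polyC -> g0 Sg p; rewrite polyC_eq0 in g0.
have := submodule_mul_poly (p * (g`_0)^-1%:P) Sg.
by rewrite -tofracM -mulrA -polyCM mulVf // mulr1.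
Qed.

End Submodule.

Theorem proposition8 (R : realType) (theta r1 r2 : R[i])
  (Hroots : theta%:P - ('X + 1) ^+ 2 = - (('X - r1%:P) * ('X - r2%:P)))
  (c : R[i]) (Hc : c != 0) (ts : seq R[i]) (m : R[i] -> int)
  (Hts : forall t, t \in ts ->
     3 + Num.max (ReC r1) (ReC r2) <= ReC t < 3 + Num.max (ReC r1) (ReC r2) + 2)
  (u : {fraction {poly R[i]}})
  (Hu : u = (c%:P)%:F * \prod_(t <- ts) (('X - t%:P)%:F) ^ (m t))
  (L : {fraction {poly R[i]}} -> Prop)
  (HL : is_simple_submodule theta u L) :
  forall p : {poly R[i]}, L (p%:F).
Proof.
case: HL => Lsub Lnz _; have [_ _ _ [_ Le Lf]] := Lsub.
have [N [D [N0 D0 uND N_roots D_roots]]] := prod_XsubC_expz_numden c ts m Hc.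
rewrite -Hu in uND.
have [g g0 [Lg g_dvd]] := submodule_poly_generator Lsub Lnz.
apply: (submodule_poly_unit Lsub _ g0 Lg).
set w := 3 + Num.max (ReC r1) (ReC r2) in Hts.
apply: (@shift_dvd_size_le1 _ 2 w _ N
  ((theta%:P - ('X + 1) ^+ 2) * (D \Po ('X + 2%:P)))).
- by rewrite Re_natr ltr0n.
- apply: g_dvd; rewrite -(act_e_tofrac uND).
  exact/(submodule_mul_poly Lsub)/Le.
- apply: g_dvd; rewrite -(act_f_tofrac theta N0 D0 uND).
  exact/(submodule_mul_poly Lsub)/Lf.
- by move=> z /N_roots /Hts /andP[].
- move=> z; rewrite rootM Hroots rootN rootM !root_XsubC root_comp hornerD hornerX hornerC.
  have max_lt_w : Num.max (ReC r1) (ReC r2) < w by rewrite /w ltrDr.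
  case/orP => [/orP[]/eqP->|/D_roots/Hts/andP[_]].
  + by apply: le_lt_trans max_lt_w; rewrite le_max lexx.
  + by apply: le_lt_trans max_lt_w; rewrite le_max lexx orbT.
  + by rewrite /ReC ReD Re_natr ltrD2r.
Qed.
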